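(* Let $G$ be a connected equimatchable graph. Then $G-v$ and $G\setminus e$ are equimatchable for all $v\in V(G)$ and all $e\in E(G)$ if and only if $G$ is either a complete graph on an odd number of vertices or a bipartite edge-stable equimatchable graph.
   Context: All graphs are finite and simple. A graph is equimatchable if all its maximal matchings have the same cardinality. $G\setminus e$ denotes the graph obtained by deleting the edge $e$ (keeping all vertices). An equimatchable graph $G$ is edge-stable if $G\setminus e$ is equimatchable for every $e\in E(G)$. *)

(* A simple graph is a symmetric irreflexive relation
   e : rel T on a finType T.  Subgraphs induced on a vertex set V : {set T}
   are handled by passing V explicitly. *)
From mathcomp Require Import all_boot.
Set Implicit Arguments. Unset Strict Implicit. Unset Printing Implicit Defensive.

Section Graphs.
Variable T : finType.

Definition simple_graph (e : rel T) : Prop := symmetric e /\ irreflexive e.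

Definition is_edge (V : {set T}) (e : rel T) (s : {set T}) : bool :=
  [exists x, exists y,
     [&& s == [set x; y], x != y, x \in V, y \in V & e x y]].

Definition matching (V : {set T}) (e : rel T) (M : {set {set T}}) : bool :=
  [forall s in M, is_edge V e s] &&
  [forall s in M, forall t in M, (s != t) ==> [disjoint s & t]].

Definition maximal_matching (V : {set T}) (e : rel T) (M : {set {set T}}) : bool :=
  matching V e M &&
  [forall s, (is_edge V e s && (s \notin M)) ==> ~~ matching V e (s |: M)].

Definition equimatchable (V : {set T}) (e : rel T) : Prop :=
  forall M N : {set {set T}},
    maximal_matching V e M -> maximal_matching V e N -> #|M| = #|N|.

Definition del_edge (e : rel T) (x y : T) : rel T :=
  fun u v => e u v && ~~ (((u == x) && (v == y)) || ((u == y) && (v == x))).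

Definition edge_stable (V : {set T}) (e : rel T) : Prop :=
  equimatchable V e /\
  forall x y, x \in V -> y \in V -> e x y -> equimatchable V (del_edge e x y).

Definition connected (V : {set T}) (e : rel T) : Prop :=
  forall x y, x \in V -> y \in V ->
    connect (fun u v => [&& u \in V, v \in V & e u v]) x y.

Definition complete_odd (V : {set T}) (e : rel T) : Prop :=
  odd #|V| /\ (forall x y, x \in V -> y \in V -> x != y -> e x y).

Definition bipartite (V : {set T}) (e : rel T) : Prop :=
  exists A : {set T}, A \subset V /\
    forall x y, x \in V -> y \in V -> e x y -> (x \in A) != (y \in A).

End Graphs.

(* In an equimatchable graph every maximal matching is maximum, so no maximal
   matching admits an augmenting path, and no maximal matching of a subgraph may
   be smaller than one of the graph; every contradiction reached is one of these.
   Call a vertex inessential if some maximal matching misses it.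

   If all G - v and G \ e are equimatchable: for a matching edge pq with p
   inessential, deleting p shows that q has an exposed neighbour; if q is
   inessential too, this neighbour is common to p and q and is their only exposed
   neighbour.  Swapping matching edges along the connected graph, one edge between
   inessential vertices makes every vertex inessential; a maximal matching
   missing w then exposes only w, and every vertex is adjacent to w, so G is an
   odd complete graph.  Otherwise the inessential vertices are independent, and an
   edge xy between essential vertices has, by deleting xy, no further neighbours,
   so G is that single edge; either way G is bipartite.

   Conversely, in an odd complete graph the exposed vertices of a maximal matching
   of G - v or G \ e form an independent set, whose size is forced by parity.  In
   a bipartite edge-stable graph, adjacent inessential vertices would be joined by
   an augmenting path, found by walking along the difference of two maximal
   matchings; hence a maximal matching of G - v either misses v and is maximal in
   G, or becomes maximal in G by adding an edge at v, and edge stability rules out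
   the coexistence of both kinds. *)

From mathcomp Require Import all_boot.
Set Implicit Arguments. Unset Strict Implicit. Unset Printing Implicit Defensive.

Lemma eq_set2 (T : finType) (x y a b : T) : [set x; y] = [set a; b] ->
  (x = a /\ y = b) \/ (x = b /\ y = a).
Proof.
move=> E.
have: x \in [set a; b] by rewrite -E set21.
have: y \in [set a; b] by rewrite -E set22.
have: a \in [set x; y] by rewrite E set21.
have: b \in [set x; y] by rewrite E set22.
by do 4!case/set2P=> ?; subst; auto.
Qed.

Lemma connected_closed (T : finType) (e : rel T) (S : pred T) u :
  connected [set: T] e -> (forall x y, S x -> e x y -> S y) -> S u -> forall x, S x.
Proof.
move=> conn Se Su x; have /connectP[p + ->] := conn u x (in_setT u) (in_setT x).
elim: p u Su => [|y p IH] u Su //= /andP[/and3P[_ _ euy]]; exact/IH/(Se u).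
Qed.

Section Matching.
Variables (T : finType) (V : {set T}) (e : rel T).
Hypothesis e_irr : irreflexive e.
Implicit Types (M N : {set {set T}}) (s t : {set T}).

Lemma coverP M x : reflect (exists2 s, s \in M & x \in s) (x \in cover M).
Proof. exact: (iffP bigcupP). Qed.

Lemma is_edgeP s : is_edge V e s ->
  exists x y, s = [set x; y] /\ [/\ x != y, x \in V, y \in V & e x y].
Proof. by case/existsP=> x /existsP[y /and5P[/eqP-> *]]; exists x, y. Qed.

Lemma is_edge2 x y : x != y -> x \in V -> y \in V -> e x y -> is_edge V e [set x; y].
Proof.
by move=> *; apply/existsP; exists x; apply/existsP; exists y; apply/and5P.
Qed.

Lemma matching_is_edge M s : matching V e M -> s \in M -> is_edge V e s.
Proof. by case/andP=> /forall_inP H _ /H. Qed.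

Lemma matching_eq M s t u : matching V e M -> s \in M -> t \in M ->
  u \in s -> u \in t -> s = t.
Proof.
case/andP=> _ /forall_inP H sM tM us ut; apply/eqP; apply: contraT => st.
have /disjoint_setI0 := implyP (forall_inP (H s sM) t tM) st.
by move/setP/(_ u); rewrite !inE us ut.
Qed.

Lemma matching_intro M : {in M, forall s, is_edge V e s} ->
  (forall s t u, s \in M -> t \in M -> u \in s -> u \in t -> s = t) ->
  matching V e M.
Proof.
move=> Me Meq; apply/andP; split; first exact/forall_inP.
apply/forall_inP=> s sM; apply/forall_inP=> t tM; apply/implyP=> st.
apply/pred0P=> u /=; apply/negP=> /andP[us ut].
by move: st; rewrite (Meq s t u) ?eqxx.
Qed.

Lemma matching_trivIset M : matching V e M -> trivIset M.
Proof.
move=> mM; apply/trivIsetP=> s t sM tM st; apply/pred0P=> u /=.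
by apply/negP=> /andP[us ut]; move: st; rewrite (matching_eq mM sM tM us ut) eqxx.
Qed.

Lemma matching_apart M s t u : matching V e M -> s \in M -> t \in M -> s != t ->
  u \in s -> u \notin t.
Proof.
by move=> mM sM tM st us; apply: contraNN st => ut; rewrite (matching_eq mM sM tM us ut).
Qed.

Lemma matchingD1 M s : matching V e M -> matching V e (M :\ s).
Proof.
move=> mM; apply: matching_intro => [t|t t' u]; rewrite !inE.
  by case/andP=> _; apply: matching_is_edge.
by case/andP=> _ tM /andP[_]; apply: matching_eq.
Qed.

Lemma mem_coverD1 M s u : matching V e M -> s \in M ->
  (u \in cover (M :\ s)) = (u \in cover M) && (u \notin s).
Proof. by move=> mM sM; rewrite coverD1 ?matching_trivIset // inE andbC. Qed.

Lemma mem_coverU1 M s u : (u \in cover (s |: M)) = (u \in s) || (u \in cover M).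
Proof. by rewrite /cover bigcup_setU big_set1 inE. Qed.

Lemma edge_covered M x y : [set x; y] \in M -> (x \in cover M) && (y \in cover M).
Proof.
by move=> xyM; apply/andP; split; apply/coverP; exists [set x; y]; rewrite ?set21 ?set22.
Qed.

Lemma exposed_notin M x y : x \notin cover M -> [set x; y] \notin M.
Proof. by apply: contra => /edge_covered/andP[]. Qed.

Lemma matchingU2 M x y : matching V e M -> x != y -> x \in V -> y \in V -> e x y ->
  x \notin cover M -> y \notin cover M -> matching V e ([set x; y] |: M).
Proof.
move=> mM xy xV yV exy xM yM.
have out s u : s \in M -> u \in s -> u \notin [set x; y].
  move=> sM us; apply/negP=> /set2P[] E; [case/negP: xM|case/negP: yM];
    by apply/coverP; exists s; rewrite // -E.
apply: matching_intro => [s|s t u]; rewrite !in_setU1.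
  by case/orP=> [/eqP->|]; [exact: is_edge2 | exact: matching_is_edge].
case/orP=> [/eqP->|sM] /orP[/eqP->|tM] // us ut.
- by move: us; rewrite (negbTE (out t u tM ut)).
- by move: ut; rewrite (negbTE (out s u sM us)).
- exact: (matching_eq mM) us ut.
Qed.

Lemma matching1 x y : x != y -> x \in V -> y \in V -> e x y ->
  matching V e [set [set x; y]].
Proof.
move=> xy xV yV exy; rewrite -[[set _]]setU0; apply: matchingU2 => //.
- by apply/andP; split; apply/forall_inP=> s; rewrite inE.
- by rewrite /cover big_set0 inE.
- by rewrite /cover big_set0 inE.
Qed.

Lemma cardU2_exposed M x y : x \notin cover M -> #|[set x; y] |: M| = #|M|.+1.
Proof. by move=> xM; rewrite cardsU1 (exposed_notin y xM). Qed.

Lemma maximalP M : maximal_matching V e M <->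
  matching V e M /\
  (forall x y, x \in V -> y \in V -> e x y -> (x \in cover M) || (y \in cover M)).
Proof.
split.
  case/andP=> mM /forallP maxM; split=> // x y xV yV exy.
  apply: contraT => /norP[xM yM].
  have xy : x != y by apply: contraTneq exy => ->; rewrite e_irr.
  move: (maxM [set x; y]); rewrite is_edge2 //= (exposed_notin y xM) /=.
  by rewrite matchingU2.
case=> mM maxM; apply/andP; split=> //; apply/forallP=> s; apply/implyP.
case/andP=> /is_edgeP[x [y [-> [xy xV yV exy]]]] sM; apply/negP=> mU.
have [u [uxy /coverP[t tM ut]]] :
    exists u, u \in [set x; y] /\ u \in cover M.
  by case/orP: (maxM x y xV yV exy) => ?; [exists x; rewrite set21|exists y; rewrite set22].
by move: sM; rewrite (matching_eq mU (setU11 _ _) (setU1r _ tM) uxy ut) tM.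
Qed.

Lemma matching_extend M : matching V e M ->
  exists2 N, maximal_matching V e N & M \subset N.
Proof.
move=> mM; move: {2}#|~: M| (leqnn #|~: M|) => n.
elim: n M mM => [|n IH] M mM Hn.
all: case maxM : (maximal_matching V e M); first by exists M.
all: move: maxM; rewrite /maximal_matching mM /= => /negbT; rewrite negb_forall.
all: case/existsP=> s; rewrite negb_imply negbK => /andP[/andP[se sM] msM].
  by move: Hn; rewrite leqn0 cards_eq0 => /eqP/setP/(_ s); rewrite !inE sM.
have [|N maxN sN] := IH _ msM.
  rewrite -ltnS; apply: leq_trans Hn; apply: proper_card.
  by rewrite properC properUr // sub1set.
by exists N => //; apply: subset_trans sN; apply: subsetUr.
Qed.

Lemma equimatchable_maximal M N : equimatchable V e ->
  maximal_matching V e N -> matching V e M -> #|M| = #|N| -> maximal_matching V e M.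
Proof.
move=> EM maxN mM MN; have [M' maxM' sM] := matching_extend mM.
suff -> : M = M' by [].
by apply/eqP; rewrite eqEcard sM /= MN (EM _ _ maxM' maxN).
Qed.

Lemma card_cover M : matching V e M -> #|cover M| = #|M| * 2.
Proof.
move=> mM; apply: card_uniform_partition; last first.
  apply/and3P; split=> //; first exact: matching_trivIset.
  apply/negP=> /(matching_is_edge mM)/is_edgeP[x [y [E _]]].
  by have := set21 x y; rewrite -E inE.
by move=> s /(matching_is_edge mM)/is_edgeP[x [y [-> [xy _ _ _]]]]; rewrite cards2 xy.
Qed.

Lemma cover_sub M : matching V e M -> cover M \subset V.
Proof.
move=> mM; apply/subsetP=> u /coverP[s sM].
by case/is_edgeP: (matching_is_edge mM sM) => x [y [-> [_ xV yV _]]] /set2P[]->.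
Qed.

Lemma card_matching_exposed M : matching V e M ->
  #|V| = #|M| * 2 + #|V :\: cover M|.
Proof.
move=> mM; rewrite -(card_cover mM) -(cardsID (cover M) V).
by rewrite (setIidPr (cover_sub mM)).
Qed.

Lemma maximal_exposed_nonadj M a b : maximal_matching V e M ->
  a \in V :\: cover M -> b \in V :\: cover M -> ~~ e a b.
Proof.
case/maximalP=> _ maxM; rewrite !inE => /andP[aM aV] /andP[bM bV].
by apply/negP=> /(maxM a b aV bV); rewrite (negbTE aM) (negbTE bM).
Qed.

Lemma equimatchable_exposed_card k :
  (forall M, maximal_matching V e M -> #|V :\: cover M| = k) -> equimatchable V e.
Proof.
move=> Uk M N maxM maxN; apply/eqP.
have := card_matching_exposed (proj1 (andP maxM)).
rewrite (card_matching_exposed (proj1 (andP maxN))) (Uk M maxM) (Uk N maxN) => /eqP.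
by rewrite eqn_add2r eqn_mul2r /= eq_sym.
Qed.

End Matching.

Lemma matching_transfer (T : finType) (V V' : {set T}) (e e' : rel T) M :
  matching V e M -> {in M, forall s, is_edge V' e' s} -> matching V' e' M.
Proof. by move=> mM Me'; apply: matching_intro Me' _ => s t u; exact: matching_eq mM. Qed.

Section Equimatchable.
Variables (T : finType) (e : rel T).
Hypotheses (e_sym : symmetric e) (e_irr : irreflexive e).
Hypothesis EM : equimatchable [set: T] e.
Implicit Types (M N : {set {set T}}) (s : {set T}).
Local Notation maximal := (maximal_matching [set: T] e).
Local Notation is_matching := (matching [set: T] e).

Lemma maximalW M : maximal M -> is_matching M.
Proof. by case/andP. Qed.

Lemma maximal_cover M x y : maximal M -> e x y -> (x \in cover M) || (y \in cover M).
Proof. by case/(maximalP _ e_irr)=> _ maxM; apply: maxM. Qed.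

Lemma exposed_nonadj M x y : maximal M ->
  x \notin cover M -> y \notin cover M -> ~~ e x y.
Proof. by move=> maxM xM yM; apply: (maximal_exposed_nonadj e_irr maxM); rewrite !inE ?xM ?yM. Qed.

Lemma matched_adj M x y : is_matching M -> [set x; y] \in M -> e x y /\ x != y.
Proof.
move=> mM /(matching_is_edge mM)/is_edgeP[a [b [/eq_set2 E [ab _ _ eab]]]].
by case: E => -[-> ->]; split=> //; rewrite (e_sym, eq_sym).
Qed.

Lemma matched_mate M x : is_matching M -> x \in cover M -> exists y, [set x; y] \in M.
Proof.
move=> mM /coverP[s sM]; case/is_edgeP: (matching_is_edge mM sM) => a [b [E _]].
by rewrite E => /set2P[] ->; [exists b | exists a; rewrite setUC]; rewrite -E.
Qed.

Lemma mate_uniq M x y z : is_matching M -> [set x; y] \in M -> [set x; z] \in M -> y = z.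
Proof.
move=> mM xyM xzM; have [_ xy] := matched_adj mM xyM.
have [[_ ->] //|[xz yx]] := eq_set2 (matching_eq mM xyM xzM (set21 x y) (set21 x z)).
by move: xy; rewrite yx xz eqxx.
Qed.

Definition swap_edge M x y z := [set x; z] |: (M :\ [set x; y]).

Lemma swap_edge_keep M x y z s : s \in M -> s != [set x; y] -> s \in swap_edge M x y z.
Proof. by move=> sM sxy; rewrite in_setU1 in_setD1 sxy sM orbT. Qed.

Lemma card_setD_swap M N x y w : [set w; x] \in M -> [set w; x] \notin N ->
  [set x; y] \notin M -> #|M :\: swap_edge N x y w| < #|M :\: N|.
Proof.
move=> wxM wxN xyM; apply: proper_card; apply/properP; split.
  apply/subsetP=> s; rewrite !in_setD => /andP[sN' sM]; rewrite sM andbT.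
  apply: contra sN' => sN; apply: swap_edge_keep sN _.
  by apply: contraNneq xyM => <-.
by exists [set w; x]; rewrite !in_setD ?wxN ?wxM // andbT negbK /swap_edge setUC setU11.
Qed.

Lemma mem_cover_swap M x y z u : is_matching M -> [set x; y] \in M ->
  (u \in cover (swap_edge M x y z)) = (u == z) || ((u \in cover M) && (u != y)).
Proof.
move=> mM xyM; have [_ xy] := matched_adj mM xyM.
rewrite mem_coverU1 (mem_coverD1 _ mM xyM) !in_set2 negb_or.
have [->|//] := eqVneq u x; by rewrite (proj1 (andP (edge_covered xyM))) xy orbT.
Qed.

Lemma maximal_swap M x y z : maximal M -> [set x; y] \in M -> e x z ->
  z \notin cover M -> maximal (swap_edge M x y z).
Proof.
move=> maxM xyM exz zM; have mM := maximalW maxM.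
have xM' : x \notin cover (M :\ [set x; y]) by rewrite (mem_coverD1 _ mM xyM) set21 andbF.
apply: (equimatchable_maximal EM maxM).
  apply: matchingU2; rewrite ?inE ?(matchingD1 _ mM) //.
    by apply: contraNneq zM => <-; case/andP: (edge_covered xyM).
  by rewrite (mem_coverD1 _ mM xyM) (negbTE zM).
by rewrite cardU2_exposed // (cardsD1 [set x; y] M) xyM.
Qed.

Lemma exposed_neq M u v : u \notin cover M -> v \in cover M -> u != v.
Proof. by move=> uM vM; apply: contraNneq uM => ->. Qed.

Definition inessential v := [exists M, maximal M && (v \notin cover M)].

Lemma inessentialP v : reflect (exists2 M, maximal M & v \notin cover M) (inessential v).
Proof. by apply: (iffP existsP) => [[M /andP[]]|[M maxM vM]]; exists M; rewrite ?maxM. Qed.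

Lemma exposed_inessential M v : maximal M -> v \notin cover M -> inessential v.
Proof. by move=> maxM vM; apply/inessentialP; exists M. Qed.

Lemma inessential_swap M x y z : maximal M -> [set x; y] \in M -> e x z ->
  z \notin cover M -> inessential y.
Proof.
move=> maxM xyM exz zM; apply: (exposed_inessential (maximal_swap maxM xyM exz zM)).
rewrite (mem_cover_swap _ _ (maximalW maxM) xyM) eqxx andbF orbF eq_sym.
by apply: exposed_neq zM _; case/andP: (edge_covered xyM).
Qed.

(* [alternating M b x p]: the walk [x :: p] alternates between edges outside and
   inside [M], its first edge being in [M] iff [b], and it ends at an exposed vertex
   with an edge outside [M]. *)
Fixpoint alternating M (b : bool) x (p : seq T) : bool :=
  if p is y :: p' then (if b then [set x; y] \in M else e x y) && alternating M (~~ b) y p'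
  else b && (x \notin cover M).

Lemma alternating_transfer M N b x p : alternating M b x p ->
  {in x :: p &, forall u v, [set u; v] \in M -> [set u; v] \in N} ->
  {in x :: p, forall u, u \notin cover M -> u \notin cover N} ->
  alternating N b x p.
Proof.
elim: p b x => [|y p IH] b x /=; first by case: b => //= xM _ /(_ x (mem_head _ _)); apply.
case/andP=> xy alt MN NM; apply/andP; split; last first.
  by apply: IH alt _ _ => [u v uP vP|u uP]; [apply: MN|apply: NM]; rewrite inE ?uP ?vP orbT.
by case: b {alt} xy => // xyM; apply: MN; rewrite ?mem_head ?inE ?eqxx ?orbT.
Qed.

Lemma no_augmenting_path M x p : maximal M -> x \notin cover M ->
  uniq (x :: p) -> ~~ alternating M false x p.
Proof.
have [n] := ubnP (size p); elim: n M x p => // n IH M x [|y [|z p]] //= + maxM xM.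
  by move=> _ _; apply/negP=> /andP[exy yM]; case/negP: (exposed_nonadj maxM xM yM).
rewrite ltnS => /ltnW sz; rewrite !inE !negb_or => /and3P[/and3P[xy xz xp] /andP[yz yp] zpU].
apply/negP=> /and3P[exy yzM alt]; have mM := maximalW maxM.
have maxN := maximal_swap maxM yzM (_ : e y x) xM; rewrite e_sym in maxN.
have covN u : (u \in cover (swap_edge M y z x)) = (u == x) || ((u \in cover M) && (u != z)).
  exact: mem_cover_swap.
have zN : z \notin cover (swap_edge M y z x) by rewrite covN eqxx andbF eq_sym (negbTE xz).
case/negP: (IH _ _ _ sz (maxN exy) zN zpU).
apply: alternating_transfer alt _ _ => [u v uP vP uvM|u uP].
  apply: swap_edge_keep uvM _; apply: contraNneq yz => uv.
  have : y \in [set u; v] by rewrite uv set21.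
  by case/set2P=> E; [move: uP|move: vP]; rewrite -E inE (negbTE yp) orbF.
move=> uM; rewrite covN (negbTE uM) andFb orbF.
by apply: contraNneq xp => ux; move: uP; rewrite ux inE (negbTE xz).
Qed.

Lemma exposed_ends_eq3 M x y z t : maximal M -> [set x; y] \in M ->
  z \notin cover M -> t \notin cover M -> e x z -> e y t -> z = t.
Proof.
move=> maxM xyM zM tM exz eyt; apply/eqP; apply: contraT => zt.
have /andP[xM yM] := edge_covered xyM; have [_ xy] := matched_adj (maximalW maxM) xyM.
have uniq_path : uniq [:: z; x; y; t].
  rewrite /= !inE !negb_or zt xy (eq_sym x t) (eq_sym y t).
  by rewrite !(exposed_neq zM, exposed_neq tM).
by case/negP: (no_augmenting_path maxM zM uniq_path); rewrite /= e_sym exz xyM eyt.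
Qed.

Lemma exposed_ends_eq5 M p q r r' w a : maximal M ->
  [set q; p] \in M -> [set r; r'] \in M -> r \notin [set q; p] ->
  w \notin cover M -> a \notin cover M -> e w q -> e p r -> e r' a -> w = a.
Proof.
move=> maxM qpM rrM rqp wM aM ewq epr er'a; apply/eqP; apply: contraT => wa.
have mM := maximalW maxM.
have qpr : [set q; p] != [set r; r'] by apply: contraNneq rqp => ->; rewrite set21.
have /andP[qM pM] := edge_covered qpM; have /andP[rM r'M] := edge_covered rrM.
have [_ qp] := matched_adj mM qpM; have [_ rr'] := matched_adj mM rrM.
have := matching_apart mM qpM rrM qpr (set21 q p).
have := matching_apart mM qpM rrM qpr (set22 q p).
rewrite !in_set2 !negb_or => /andP[pr pr'] /andP[qr qr'].
have path_uniq : uniq [:: w; q; p; r; r'; a].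
  rewrite /= !inE !negb_or wa qp qr qr' pr pr' rr' !(eq_sym _ a) !(exposed_neq aM) //.
  by rewrite !(exposed_neq wM).
by case/negP: (no_augmenting_path maxM wM path_uniq); rewrite /= ewq qpM epr rrM er'a.
Qed.

Lemma is_edge_setD1 s v : is_edge [set: T] e s -> v \notin s -> is_edge ([set: T] :\ v) e s.
Proof.
case/is_edgeP=> a [b [-> [ab _ _ eab]]]; rewrite !inE negb_or => /andP[va vb].
by apply: is_edge2; rewrite // !inE 1?eq_sym ?va ?vb.
Qed.

Lemma maximal_vertex_deleted M v : maximal M -> v \notin cover M ->
  maximal_matching ([set: T] :\ v) e M.
Proof.
move=> maxM vM; apply/(maximalP _ e_irr); split=> [|x y _ _]; last exact: maximal_cover.
apply: (matching_transfer (maximalW maxM)) => s sM.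
apply: is_edge_setD1; first exact: matching_is_edge (maximalW maxM) sM.
by apply: contra vM => vs; apply/coverP; exists s.
Qed.

Lemma vertex_deleted_matching M v : matching ([set: T] :\ v) e M ->
  is_matching M /\ v \notin cover M.
Proof.
move=> mV; split.
  apply: (matching_transfer mV) => s /(matching_is_edge mV)/is_edgeP[a [b [-> [ab _ _ eab]]]].
  by apply: is_edge2; rewrite ?inE.
apply/negP=> /coverP[s sM]; case/is_edgeP: (matching_is_edge mV sM) => a [b [-> [_ aV bV _]]].
by case/set2P=> vab; move: aV bV; rewrite -vab !inE eqxx.
Qed.

Lemma maximal_vertex_deleted_cases v M : maximal_matching ([set: T] :\ v) e M ->
  (maximal M /\ v \notin cover M) \/
  exists w, [/\ e v w, w \notin cover M, maximal ([set v; w] |: M) &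
    forall t, e w t -> t != v -> t \in cover M].
Proof.
case/(maximalP _ e_irr)=> mV maxV; have [mM vM] := vertex_deleted_matching mV.
have inV a : a != v -> a \in [set: T] :\ v by rewrite !inE andbT.
have [/existsP[w /andP[evw wM]]|noW] := boolP [exists w, e v w && (w \notin cover M)].
  have vw : v != w by apply: contraTneq evw => ->; rewrite e_irr.
  right; exists w; split=> // [|t ewt tv].
    apply/(maximalP _ e_irr); split; first by apply: matchingU2; rewrite ?inE.
    move=> a b _ _ eab; rewrite !mem_coverU1 !in_set2.
    have [//|av] := eqVneq a v; have [|bv] := eqVneq b v; first by rewrite orbT.
    by case/orP: (maxV a b (inV a av) (inV b bv) eab) => ->; rewrite ?orbT.
  by have := maxV w t (inV w _) (inV t tv) ewt; rewrite eq_sym (negbTE wM); apply.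
left; split=> //; apply/(maximalP _ e_irr); split=> // a b _ _ eab.
have nbr c : e v c -> c \in cover M.
  by move=> evc; apply: contraT => cM; case/existsP: noW; exists c; rewrite evc.
have [av|av] := eqVneq a v; first by rewrite (nbr b) ?orbT // -av.
have [bv|bv] := eqVneq b v; first by rewrite (nbr a) // -bv e_sym.
exact: maxV (inV a av) (inV b bv) eab.
Qed.

Lemma maximal_setD1_vertex M v w : maximal M -> [set v; w] \in M ->
  (forall z, e w z -> z \in cover M) -> maximal_matching ([set: T] :\ v) e (M :\ [set v; w]).
Proof.
move=> maxM vwM wN; have mM := maximalW maxM; apply/(maximalP _ e_irr); split.
  apply: (matching_transfer (matchingD1 _ mM)) => s; rewrite in_setD1 => /andP[svw sM].
  apply: is_edge_setD1; first exact: matching_is_edge mM sM.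
  by apply: contra svw => vs; rewrite (matching_eq mM sM vwM vs (set21 v w)).
move=> a b; rewrite !inE !andbT => av bv eab.
rewrite !(mem_coverD1 _ mM vwM) !in_set2 (negbTE av) (negbTE bv) /=.
have ab : a != b by apply: contraTneq eab => ->; rewrite e_irr.
have [aw|aw] := eqVneq a w; first by move: ab eab; rewrite aw => wb /wN ->; rewrite eq_sym wb orbT.
have [bw|bw] := eqVneq b w; first by rewrite wN // -bw e_sym.
by rewrite !andbT; apply: maximal_cover.
Qed.

Lemma inessential_mate_exposed_nbr v M w :
  equimatchable ([set: T] :\ v) e -> inessential v -> maximal M -> [set v; w] \in M ->
  exists2 z, z \notin cover M & e w z.
Proof.
move=> EMv /inessentialP[N maxN vN] maxM vwM.
have [//|noz] := boolP [exists z, (z \notin cover M) && e w z].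
  by case/existsP=> z /andP[]; exists z.
have wN z : e w z -> z \in cover M.
  by move=> ewz; apply: contraT => zM; case/existsP: noz; exists z; rewrite zM.
have := EMv _ _ (maximal_setD1_vertex maxM vwM wN) (maximal_vertex_deleted maxN vN).
by rewrite (EM maxN maxM) (cardsD1 [set v; w] M) vwM => /n_Sn.
Qed.

Lemma del_edge_irr x y : irreflexive (del_edge e x y).
Proof. by move=> u; rewrite /del_edge e_irr. Qed.

Lemma del_edge_sym x y : symmetric (del_edge e x y).
Proof. by move=> u w; rewrite /del_edge e_sym orbC (andbC (u == y)) (andbC (u == x)). Qed.

Lemma maximal_setD1_del_edge M x y : maximal M -> [set x; y] \in M ->
  (forall u, e x u || e y u -> u \in cover M) ->
  maximal_matching [set: T] (del_edge e x y) (M :\ [set x; y]).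
Proof.
move=> maxM xyM nbr; have mM := maximalW maxM.
apply/(maximalP _ (del_edge_irr x y)); split.
  apply: (matching_transfer (matchingD1 _ mM)) => s; rewrite in_setD1 => /andP[sxy sM].
  case/is_edgeP: (matching_is_edge mM sM) => a [b [Es [ab _ _ eab]]].
  rewrite Es in sxy *; apply: is_edge2; rewrite ?inE // /del_edge eab /=.
  by apply: contra sxy => /orP[]/andP[/eqP-> /eqP->]; rewrite setUC.
have out u w : u \in [set x; y] -> del_edge e x y u w ->
    (w \in cover M) && (w \notin [set x; y]).
  have ne u' : e u' w -> u' != w by apply: contraTneq => ->; rewrite e_irr.
  case/set2P=> -> /andP[euw]; rewrite nbr ?euw ?orbT //= !in_set2 !negb_or !eqxx /=.
    by case/andP=> -> _; rewrite andbT eq_sym ne.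
  by case/andP=> _ ->; rewrite eq_sym ne.
move=> a b _ _ dab; rewrite !(mem_coverD1 _ mM xyM).
have [ax|ax] := boolP (a \in [set x; y]); first by rewrite (out a b) ?orbT.
have [bx|bx] := boolP (b \in [set x; y]).
  by rewrite del_edge_sym in dab; case/andP: (out b a bx dab) => ->.
by rewrite !andbT; apply: maximal_cover; case/andP: dab.
Qed.

Lemma maximal_del_edge P x y : maximal_matching [set: T] (del_edge e x y) P ->
  x \in cover P -> maximal P.
Proof.
case/(maximalP _ (del_edge_irr x y))=> mP maxP xP; apply/(maximalP _ e_irr); split.
  apply: (matching_transfer mP) => s sP.
  case/is_edgeP: (matching_is_edge mP sP) => a [b [-> [ab _ _ /andP[eab _]]]].
  by apply: is_edge2; rewrite ?inE.
move=> a b _ _ eab; case dab : (del_edge e x y a b); first exact: maxP.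
by move: dab; rewrite /del_edge eab /= => /negbFE/orP[]/andP[/eqP-> /eqP->]; rewrite xP ?orbT.
Qed.

Lemma edge_exposed_nbr M x y z : equimatchable [set: T] (del_edge e x y) ->
  maximal M -> [set x; y] \in M -> z != y -> e x z ->
  exists2 u, u \notin cover M & e x u || e y u.
Proof.
move=> EMxy maxM xyM zy exz.
have [|nou] := boolP [exists u, (u \notin cover M) && (e x u || e y u)].
  by case/existsP=> u /andP[]; exists u.
have nbr u : e x u || e y u -> u \in cover M.
  by move=> h; apply: contraT => uM; case/existsP: nou; exists u; rewrite uM.
have [_ xy] := matched_adj (maximalW maxM) xyM.
have xz : x != z by apply: contraTneq exz => <-; rewrite e_irr.
have dxz : del_edge e x y x z by rewrite /del_edge exz eqxx (negbTE zy) (negbTE xy).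
have [P maxP] := matching_extend (matching1 xz (in_setT x) (in_setT z) dxz).
rewrite sub1set => /edge_covered/andP[xP _].
have := EMxy _ _ (maximal_setD1_del_edge maxM xyM nbr) maxP.
by rewrite -(EM maxM (maximal_del_edge maxP xP)) (cardsD1 [set x; y] M) xyM => /n_Sn.
Qed.

Lemma noninessential_edge_nbr M x y z : equimatchable [set: T] (del_edge e x y) ->
  maximal M -> [set x; y] \in M -> ~~ inessential x -> ~~ inessential y -> e x z -> z = y.
Proof.
move=> EMxy maxM xyM Dx Dy exz; apply/eqP; apply: contraT => zy.
have [u uM /orP[exu|eyu]] := edge_exposed_nbr EMxy maxM xyM zy exz.
  by case/negP: Dy; apply: inessential_swap maxM xyM exu uM.
have yxM : [set y; x] \in M by rewrite setUC.
by case/negP: Dx; apply: inessential_swap maxM yxM eyu uM.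
Qed.

Section VertexStable.
Hypothesis EMv : forall v, equimatchable ([set: T] :\ v) e.

Lemma inessential_edge_exposed M p q : maximal M -> [set p; q] \in M ->
  inessential p -> inessential q ->
  exists a, [/\ a \notin cover M, e p a, e q a &
    forall c, c \notin cover M -> e p c || e q c -> c = a].
Proof.
move=> maxM pqM Dp Dq; have qpM : [set q; p] \in M by rewrite setUC.
have [a aM eqa] := inessential_mate_exposed_nbr (@EMv p) Dp maxM pqM.
have [b bM epb] := inessential_mate_exposed_nbr (@EMv q) Dq maxM qpM.
have ba := exposed_ends_eq3 maxM pqM bM aM epb eqa.
exists a; split=> //; first by rewrite -ba.
move=> c cM /orP[epc|eqc]; first exact: exposed_ends_eq3 maxM pqM cM aM epc eqa.
by rewrite -(exposed_ends_eq3 maxM pqM bM cM epb eqc) ba.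
Qed.

Lemma inessential_pair_nbr M p q r r' : maximal M -> [set p; q] \in M ->
  inessential p -> inessential q -> [set r; r'] \in M -> e r p -> inessential r.
Proof.
move=> maxM pqM Dp Dq rrM erp; apply: contraT => Dr; have mM := maximalW maxM.
have [a [aM _ eqa a_uniq]] := inessential_edge_exposed maxM pqM Dp Dq.
have qpM : [set q; p] \in M by rewrite setUC.
have /andP[pM _] := edge_covered pqM.
have maxM1 := maximal_swap maxM qpM eqa aM.
have cov1 u := mem_cover_swap a u (maximalW maxM) qpM.
have rqp : r \notin [set q; p].
  by rewrite in_set2; apply/norP; split; apply: contraNneq Dr => ->.
have rrM1 : [set r; r'] \in swap_edge M q p a.
  by apply: swap_edge_keep rrM _; apply: contraNneq rqp => <-; rewrite set21.
have pM1 : p \notin cover (swap_edge M q p a).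
  by rewrite cov1 eqxx andbF orbF eq_sym (exposed_neq aM).
have maxM2 := maximal_swap maxM1 rrM1 erp pM1.
have cov2 u := mem_cover_swap p u (maximalW maxM1) rrM1.
have qr' : q != r'.
  apply: contraNneq rqp => qr; rewrite (mate_uniq mM qpM (_ : [set q; r] \in M)) ?set22 //.
  by rewrite qr setUC.
have qaM2 : [set q; a] \in swap_edge (swap_edge M q p a) r r' p.
  apply: swap_edge_keep; first exact: setU11.
  apply: contraTneq (set21 q a) => ->; rewrite !in_set2 negb_or eq_sym qr' andbT.
  by apply: contraNneq rqp => ->; rewrite set21.
have [b [bM2 eqb eab _]] :=
  inessential_edge_exposed maxM2 qaM2 Dq (exposed_inessential maxM aM).
move: bM2; rewrite cov2 cov1 negb_or negb_and negbK => /andP[bp /orP[|/eqP br']].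
  rewrite negb_or negb_and bp orbF => /andP[ba bM].
  by move: ba; rewrite (a_uniq b bM) ?eqb ?orbT ?eqxx.
have r'rM : [set r'; r] \in M by rewrite setUC.
by case/negP: Dr; apply: (inessential_swap maxM r'rM _ aM); rewrite -br' e_sym.
Qed.

Lemma inessential_pair_nbr_mate M p q r r' : maximal M -> [set p; q] \in M ->
  inessential p -> inessential q -> [set r; r'] \in M -> e r p -> inessential r'.
Proof.
move=> maxM pqM Dp Dq rrM erp; have [a [aM _ eqa _]] := inessential_edge_exposed maxM pqM Dp Dq.
have [|r'qp] := boolP (r' \in [set q; p]); first by case/set2P=> ->.
have qpM : [set q; p] \in M by rewrite setUC.
have maxM1 := maximal_swap maxM qpM eqa aM.
have pM1 : p \notin cover (swap_edge M q p a).
  rewrite (mem_cover_swap _ _ (maximalW maxM) qpM) eqxx andbF orbF eq_sym.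
  by apply: exposed_neq aM _; case/andP: (edge_covered pqM).
apply: (inessential_swap maxM1 _ erp pM1); apply: swap_edge_keep rrM _.
by apply: contraNneq r'qp => <-; rewrite set22.
Qed.

Definition inessential_pair M p :=
  [exists q, [&& [set p; q] \in M, inessential p & inessential q]].

Definition inessential_reach M p :=
  inessential_pair M p ||
  (p \notin cover M) && [exists p1, inessential_pair M p1 && e p1 p].

Lemma inessential_reach_nbr M : maximal M ->
  forall p r, inessential_reach M p -> e p r -> inessential_reach M r.
Proof.
move=> maxM p r + epr; have mM := maximalW maxM; have erp : e r p by rewrite e_sym.
case/orP=> [/existsP[q /and3P[pqM Dp Dq]]|/andP[pM /existsP[p1 /andP[]]]].
  have [rM|rM] := boolP (r \in cover M); last first.
    apply/orP; right; rewrite rM; apply/existsP; exists p; rewrite epr andbT.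
    by apply/existsP; exists q; rewrite pqM Dp Dq.
  have [r' rrM] := matched_mate mM rM; apply/orP; left; apply/existsP; exists r'.
  rewrite rrM (inessential_pair_nbr maxM pqM Dp Dq rrM erp).
  by rewrite (inessential_pair_nbr_mate maxM pqM Dp Dq rrM erp).
case/existsP=> q1 /and3P[pq1M Dp1 Dq1] ep1p.
have rM : r \in cover M by apply: contraT => rM; case/negP: (exposed_nonadj maxM pM rM).
have [r' rrM] := matched_mate mM rM.
have Dr' := inessential_swap maxM rrM erp pM.
have Dr : inessential r.
  have [|rpq] := boolP (r \in [set p1; q1]); first by case/set2P=> ->.
  have maxM1 := maximal_swap maxM pq1M ep1p pM.
  have pp1M1 : [set p; p1] \in swap_edge M p1 q1 p by rewrite /swap_edge [[set p; p1]]setUC setU11.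
  have rrM1 : [set r; r'] \in swap_edge M p1 q1 p.
    by apply: swap_edge_keep rrM _; apply: contraNneq rpq => <-; rewrite set21.
  exact: inessential_pair_nbr maxM1 pp1M1 (exposed_inessential maxM pM) Dp1 rrM1 erp.
by apply/orP; left; apply/existsP; exists r'; rewrite rrM Dr Dr'.
Qed.

Hypothesis conn : connected [set: T] e.

Lemma inessential_edge_all u v : inessential u -> inessential v -> e u v ->
  forall x, inessential x.
Proof.
move=> Du Dv euv; have uv : u != v by apply: contraTneq euv => ->; rewrite e_irr.
have [M maxM] := matching_extend (matching1 uv (in_setT u) (in_setT v) euv).
rewrite sub1set => uvM.
have reach : forall x, inessential_reach M x.
  apply: (connected_closed (u := u) conn (inessential_reach_nbr maxM)).
  by apply/orP; left; apply/existsP; exists v; rewrite uvM Du Dv.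
move=> x; case/orP: (reach x) => [/existsP[y /and3P[]]|/andP[xM _]] //.
exact: exposed_inessential maxM xM.
Qed.

Lemma all_inessential_star (allD : forall x, inessential x) w :
  exists M, [/\ maximal M, w \notin cover M & forall p, p != w -> (p \in cover M) && e p w].
Proof.
have /inessentialP[M maxM wM] := allD w; have mM := maximalW maxM.
exists M; split=> //.
pose S p := (p == w) || (p \in cover M) && e p w.
suff Sall x : S x by move=> p pw; move: (Sall p); rewrite /S (negbTE pw).
apply: (connected_closed (S := S) conn _ (_ : S w)); last by rewrite /S eqxx.
move=> p r /orP[/eqP->|/andP[pM epw]] epr.
  have rM : r \in cover M by apply: contraT => rM; case/negP: (exposed_nonadj maxM wM rM).
  by rewrite /S rM e_sym epr orbT.
have [q pqM] := matched_mate mM pM.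
have [a [aM _ eqa a_uniq]] := inessential_edge_exposed maxM pqM (allD p) (allD q).
have wa : w = a by apply: a_uniq; rewrite ?epw.
subst a; rewrite /S; have [//|rw] := eqVneq r w.
have rM : r \in cover M by apply: contraT => rM; case/eqP: rw; apply: a_uniq; rewrite ?epr.
have [->|rq] := eqVneq r q; first by rewrite eqa; case/andP: (edge_covered pqM) => _ ->.
have [r' rrM] := matched_mate mM rM.
have [a' [a'M era' er'a' _]] := inessential_edge_exposed maxM rrM (allD r) (allD r').
have qpM : [set q; p] \in M by rewrite setUC.
have rqp : r \notin [set q; p].
  by rewrite in_set2 negb_or rq; apply: contraTneq epr => ->; rewrite e_irr.
have ewq : e w q by rewrite e_sym.
by rewrite (exposed_ends_eq5 maxM qpM rrM rqp wM a'M ewq epr er'a') rM era'.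
Qed.

Lemma all_inessential_complete_odd (allD : forall x, inessential x) (w : T) :
  complete_odd [set: T] e.
Proof.
split=> [|x y _ _ xy]; last by have [M [_ _ /(_ x xy)/andP[]]] := all_inessential_star allD y.
have [M [maxM wM star]] := all_inessential_star allD w.
have exposed : [set: T] :\: cover M = [set w].
  apply/setP=> x; rewrite !inE andbT; have [->//|xw] := eqVneq x w.
  by case/andP: (star x xw) => ->.
rewrite (card_matching_exposed (maximalW maxM)) exposed cards1.
by rewrite addn1 /= oddM andbF.
Qed.

Hypothesis EMe : forall x y, e x y -> equimatchable [set: T] (del_edge e x y).

Lemma noninessential_edge_spans x y : ~~ inessential x -> ~~ inessential y -> e x y ->
  forall p, p \in [set x; y].
Proof.
move=> Dx Dy exy; have xy : x != y by apply: contraTneq exy => ->; rewrite e_irr.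
have [M maxM] := matching_extend (matching1 xy (in_setT x) (in_setT y) exy).
rewrite sub1set => xyM; have yxM : [set y; x] \in M by rewrite setUC.
have eyx : e y x by rewrite e_sym.
apply: (connected_closed (u := x) conn) => [p r /set2P[]-> exr|]; last exact: set21.
  by rewrite (noninessential_edge_nbr (EMe exy) maxM xyM Dx Dy exr) set22.
by rewrite (noninessential_edge_nbr (EMe eyx) maxM yxM Dy Dx exr) set21.
Qed.

Lemma complete_odd_or_bipartite : complete_odd [set: T] e \/ bipartite [set: T] e.
Proof.
have [/existsP[u /existsP[v /and3P[Du Dv euv]]]|noDD] :=
  boolP [exists u, exists v, [&& inessential u, inessential v & e u v]].
  by left; exact: all_inessential_complete_odd (inessential_edge_all Du Dv euv) u.
right; have [/existsP[x /existsP[y /and3P[Dx Dy exy]]]|noNN] :=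
  boolP [exists x, exists y, [&& ~~ inessential x, ~~ inessential y & e x y]].
  exists [set x]; split=> [|a b _ _ eab]; first exact: subsetT.
  have ab : a != b by apply: contraTneq eab => ->; rewrite e_irr.
  have xy : x != y by apply: contraTneq exy => ->; rewrite e_irr.
  have span := noninessential_edge_spans Dx Dy exy.
  move: (span a) (span b) ab; rewrite !inE.
  by do 2!case/orP=> /eqP->; rewrite ?eqxx // ?(eq_sym y x) (negbTE xy).
exists [set v | inessential v]; split=> [|a b _ _ eab]; first exact: subsetT.
rewrite !inE; have [Da|Da] := boolP (inessential a); have [Db|Db] := boolP (inessential b) => //.
  by case/negP: noDD; apply/existsP; exists a; apply/existsP; exists b; rewrite Da Db eab.
by case/negP: noNN; apply/existsP; exists a; apply/existsP; exists b; rewrite Da Db eab.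
Qed.

End VertexStable.

Section Bipartite.
Variable A : {set T}.
Hypothesis A_bip : forall x y, e x y -> (x \in A) != (y \in A).

(* Arcs leave [A] along edges and enter [A] along matching edges, so walks
   starting in [A] alternate. *)
Definition alt_arc M : rel T := fun x y => if x \in A then e x y else [set x; y] \in M.

Lemma alt_arc_side M x y : is_matching M -> alt_arc M x y -> (y \in A) = (x \notin A).
Proof.
move=> mM; rewrite /alt_arc; case: ifP => xA; last case/(matched_adj mM).
all: by move=> /A_bip; rewrite xA; case: (y \in A).
Qed.

Lemma alternating_of_arc_path M v p : is_matching M -> path (alt_arc M) v p ->
  last v p \notin A -> last v p \notin cover M -> alternating M (v \notin A) v p.
Proof.
move=> mM; elim: p v => [|y p IH] v /=; first by move=> _ -> ->.
case/andP=> vy pth lA lM; have yA : (y \notin A) = (v \in A) by rewrite (alt_arc_side mM vy) negbK.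
by rewrite negbK -yA IH // andbT yA; move: vy; rewrite /alt_arc; case: (v \in A).
Qed.

Lemma exposed_reach M N w : maximal M -> maximal N -> w \notin cover N -> w \notin A ->
  exists u, [/\ u \notin cover M, u \notin A & connect (alt_arc M) w u].
Proof.
move=> maxM; have mM := maximalW maxM.
have [n] := ubnP #|M :\: N|; elim: n N w => // n IH N w + maxN wN wA.
have mN := maximalW maxN; rewrite ltnS => MN.
have [wM|wM] := boolP (w \in cover M); last by exists w; rewrite connect0.
have [x wxM] := matched_mate mM wM; have [ewx _] := matched_adj mM wxM.
have xA : x \in A by have := A_bip ewx; rewrite (negbTE wA); case: (x \in A).
have xN : x \in cover N by apply: contraT => xN; case/negP: (exposed_nonadj maxN wN xN).
have [y xyN] := matched_mate mN xN; have [exy _] := matched_adj mN xyN.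
have yA : y \notin A by have := A_bip exy; rewrite xA; case: (y \in A).
have yw : y != w by apply: contraNneq wN => <-; case/andP: (edge_covered xyN).
have xyM : [set x; y] \notin M.
  by apply: contra yw => xyM; apply/eqP; apply: mate_uniq mM xyM _; rewrite setUC.
have exw : e x w by rewrite e_sym.
have yN' : y \notin cover (swap_edge N x y w).
  by rewrite (mem_cover_swap _ _ mN xyN) eqxx andbF orbF.
have lt : #|M :\: swap_edge N x y w| < n.
  by apply: leq_trans MN; apply: card_setD_swap; rewrite // exposed_notin.
have [u [uM uA yu]] := IH _ y lt (maximal_swap maxN xyN exw wN) yN' yA.
exists u; split=> //; apply: connect_trans yu.
apply: (connect_trans (connect1 (_ : alt_arc M w x))); try apply: connect1.
all: by rewrite /alt_arc ?(negbTE wA) ?xA.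
Qed.

Lemma bipartite_inessential_nonadj v w : inessential v -> inessential w -> ~~ e v w.
Proof.
wlog vA : v w / v \in A.
  move=> H Dv Dw; apply/negP=> evw; have [vA|vA] := boolP (v \in A).
    by case/negP: (H v w vA Dv Dw).
  have wA : w \in A by move: (A_bip evw); rewrite (negbTE vA); case: (w \in A).
  by case/negP: (H w v wA Dw Dv); rewrite e_sym.
move=> /inessentialP[M maxM vM] /inessentialP[N maxN wN]; apply/negP=> evw.
have wA : w \notin A by have := A_bip evw; rewrite vA; case: (w \in A).
have [u [uM uA wu]] := exposed_reach maxM maxN wN wA.
have /connectP[p pth ul] : connect (alt_arc M) v u.
  by apply: connect_trans wu; apply: connect1; rewrite /alt_arc vA.
move: uM uA; rewrite ul; case: (shortenP pth) => p' pth' uniq_p' _ uM uA.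
have := alternating_of_arc_path (maximalW maxM) pth' uA uM; rewrite vA.
by apply/negP; apply: no_augmenting_path.
Qed.

Hypothesis EMe : forall x y, e x y -> equimatchable [set: T] (del_edge e x y).

Lemma bipartite_vertex_deleted v : equimatchable ([set: T] :\ v) e.
Proof.
have mixed M1 M2 w : maximal M1 -> v \notin cover M1 -> e v w ->
    maximal ([set v; w] |: M2) -> (forall t, e w t -> t != v -> t \in cover M2) -> False.
  move=> maxM1 vM1 evw maxP nbr; set P := _ |: M2 in maxP.
  have vwP : [set v; w] \in P := setU11 _ _.
  have wvP : [set w; v] \in P by rewrite setUC.
  have wM1 : w \in cover M1 by move: (maximal_cover maxM1 evw); rewrite (negbTE vM1).
  have [t wtM1] := matched_mate (maximalW maxM1) wM1.
  have [ewt _] := matched_adj (maximalW maxM1) wtM1.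
  have tv : t != v by apply: contraNneq vM1 => <-; case/andP: (edge_covered wtM1).
  have ewv : e w v by rewrite e_sym.
  have [u uP /orP[ewu|evu]] := edge_exposed_nbr (EMe ewv) maxP wvP tv ewt.
    have uv : u != v by apply: contraNneq uP => ->; rewrite mem_coverU1 set21.
    by move: uP; rewrite mem_coverU1 nbr ?orbT.
  have Dw := inessential_swap maxP vwP evu uP.
  by case/negP: (bipartite_inessential_nonadj (exposed_inessential maxM1 vM1) Dw).
move=> M1 M2 max1 max2.
have [[maxM1 vM1]|[w1 [ev1 _ maxP1 nbr1]]] := maximal_vertex_deleted_cases max1;
have [[maxM2 vM2]|[w2 [ev2 _ maxP2 nbr2]]] := maximal_vertex_deleted_cases max2.
- exact: EM maxM1 maxM2.
- by case: (mixed _ _ _ maxM1 vM1 ev2 maxP2 nbr2).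
- by case: (mixed _ _ _ maxM2 vM2 ev1 maxP1 nbr1).
have [_ vM1] := vertex_deleted_matching (proj1 (andP max1)).
have [_ vM2] := vertex_deleted_matching (proj1 (andP max2)).
by have := EM maxP1 maxP2; rewrite !cardU2_exposed // => -[].
Qed.

End Bipartite.

End Equimatchable.

Section CompleteOdd.
Variables (T : finType) (e : rel T).
Hypothesis e_irr : irreflexive e.
Hypothesis Ko : complete_odd [set: T] e.

Lemma complete_odd_vertex_deleted v : equimatchable ([set: T] :\ v) e.
Proof.
have [oddT complete] := Ko; apply: (equimatchable_exposed_card (k := 0)) => M maxM.
have := card_matching_exposed (proj1 (andP maxM)); set U := _ :\: cover M => cardTv.
have U_le1 : #|U| <= 1.
  apply/card_le1_eqP=> a b aU bU; apply/eqP; apply: contraT => ab.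
  by have := maximal_exposed_nonadj e_irr maxM aU bU; rewrite complete ?inE // eq_sym.
have U_even : ~~ odd #|U|.
  by move: oddT; rewrite (cardsD1 v) in_setT cardTv /= add0n oddD oddM andbF.
by move: U_le1 U_even; case: #|U| => [|[]].
Qed.

Lemma complete_odd_edge_deleted x y : e x y -> equimatchable [set: T] (del_edge e x y).
Proof.
have [oddT complete] := Ko; move=> exy.
have xy : x != y by apply: contraTneq exy => ->; rewrite e_irr.
apply: (equimatchable_exposed_card (k := 1)) => M maxM.
have := card_matching_exposed (proj1 (andP maxM)); set U := _ :\: cover M => cardT.
have U_le2 : #|U| <= 2.
  have [->|[a aU]] := set_0Vmem U; first by rewrite cards0.
  rewrite (cardsD1 a) aU ltnS; apply/card_le1_eqP=> b c; rewrite !in_setD1.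
  have pair u : u != a -> u \in U -> ((a == x) && (u == y)) || ((a == y) && (u == x)).
    move=> ua uU; have := maximal_exposed_nonadj (del_edge_irr e_irr x y) maxM aU uU.
    by rewrite /del_edge complete ?inE 1?eq_sym // negbK.
  move=> /andP[ba bU] /andP[ca cU]; move: (pair b ba bU) (pair c ca cU).
  have [->|ax] := eqVneq a x; first by rewrite (negbTE xy) !orbF => /eqP-> /eqP->.
  by move=> /= /andP[_ /eqP->] /andP[_ /eqP->].
have U_odd : odd #|U| by move: oddT; rewrite cardT oddD oddM andbF.
by move: U_le2 U_odd; case: #|U| => [|[|[]]].
Qed.

End CompleteOdd.

Theorem corollary8p1 (T : finType) (e : rel T) :
  simple_graph e ->
  connected [set: T] e ->
  equimatchable [set: T] e ->
  ((forall v : T, equimatchable ([set: T] :\ v) e) /\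
   (forall x y : T, e x y -> equimatchable [set: T] (del_edge e x y)))
  <->
  (complete_odd [set: T] e \/
   (bipartite [set: T] e /\ edge_stable [set: T] e)).
Proof.
move=> [e_sym e_irr] conn EM; split.
  case=> EMv EMe; have [Ko|bip] := complete_odd_or_bipartite e_sym e_irr EM EMv conn EMe.
    by left.
  by right; split=> //; split=> // x y _ _; apply: EMe.
case=> [Ko|[[A [_ A_bip]] [_ EMe]]].
  by split; [apply: complete_odd_vertex_deleted | apply: complete_odd_edge_deleted].
have EMe' x y : e x y -> equimatchable [set: T] (del_edge e x y) by apply: EMe; rewrite inE.
split=> // v; apply: (bipartite_vertex_deleted e_sym e_irr EM (A := A)) => // x y exy.
by apply: A_bip; rewrite ?inE.
Qed.
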